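(* Let $\mathcal{V}$ be a finite set of nodes, $\mathcal{P}$ a finite set of labels with $|\mathcal{P}|\ge 2$, $\mathcal{E}$ a set of unordered pairs of nodes, $\theta_{ip}\in\mathbb{R}$, and associative pairwise potentials $\theta_{ij}(p,q)=-C_{ij,p}[p=q]$ with $C_{ij,p}\ge0$. Let $$L(\vec{y},\vec{\lambda})=\sum_{i\in\mathcal{V}}\sum_{p\in\mathcal{P}}\theta_{ip}y_{ip}-\sum_{\{i,j\}\in\mathcal{E}}\sum_{p\in\mathcal{P}}C_{ij,p}\,y_{ip}y_{jp}+\sum_{i\in\mathcal{V}}\lambda_i\Big(\sum_{p\in\mathcal{P}}y_{ip}-1\Big)$$ for $\vec y\in\{0,1\}^{\mathcal V\times\mathcal P}$, $\vec\lambda\in\mathbb{R}^{\mathcal V}$. Consider the following coordinate ascent algorithm started from any $\vec\lambda_0$: set $\vec\lambda:=\vec\lambda_0$; repeat the following pass until a pass makes no change: for each node $j\in\mathcal V$, compute for every $p\in\mathcal P$ the quantity $\delta^j_p=MM_{jp,0}-MM_{jp,1}$, where $MM_{jp,k}=\min\{L(\vec y,\vec\lambda):y_{jp}=k\}$ (with the current $\vec\lambda$); let $\delta^j_{(1)}$ be the largest of the $\delta^j_p$ (attained at $p^{(1)}_j$) and $\delta^j_{(2)}$ the largest over $p\ne p^{(1)}_j$; if $\delta^j_{(1)}$ and $\delta^j_{(2)}$ are of the same sign (both positive or both negative), set $\lambda_j:=\lambda_j+\tfrac12(\delta^j_{(1)}+\delta^j_{(2)})$ and mark the pass as having made a change.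 Then the point $\vec\lambda$ returned by the algorithm (upon termination) satisfies the weak agreement condition.
   Context: For $\vec\lambda\in\mathbb{R}^{\mathcal V}$, $i\in\mathcal V$, $p\in\mathcal P$, define $Z_{ip}(\vec\lambda)=\{z\in\{0,1\}:\ \exists\,\vec y^{\vec\lambda}\in\operatorname{Argmin}_{\vec y\in\{0,1\}^{\mathcal V\times\mathcal P}}L(\vec y,\vec\lambda)\text{ with }y^{\vec\lambda}_{ip}=z\}$. A point $\vec\lambda$ satisfies the weak agreement condition if for every node $i\in\mathcal V$: (1) there exists $p\in\mathcal P$ with $1\in Z_{ip}(\vec\lambda)$; and (2) for every $p\in\mathcal P$, if $Z_{ip}(\vec\lambda)=\{1\}$ then $0\in Z_{iq}(\vec\lambda)$ for all $q\ne p$. *)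

From HB Require Import structures.
From mathcomp Require Import all_boot all_order all_algebra.
Set Implicit Arguments. Unset Strict Implicit. Unset Printing Implicit Defensive.
Import Order.TTheory GRing.Theory Num.Theory.
Local Open Scope ring_scope.

Section MRF.
Variables (R : realFieldType) (V P : finType).
Variable theta : V -> P -> R.
(* edges: unordered pairs {i,j} of nodes, represented as 2-element sets *)
Variable E : {set {set V}}.
Variable C : {set V} -> P -> R.

Definition labeling := {ffun V * P -> bool}.

Definition yv (y : labeling) (i : V) (p : P) : R := (y (i, p) : nat)%:R.

Definition L (y : labeling) (lam : V -> R) : R :=
  \sum_(i : V) \sum_(p : P) theta i p * yv y i p
  - \sum_(e in E) \sum_(p : P) C e p * \prod_(i in e) yv y i p
  + \sum_(i : V) lam i * (\sum_(p : P) yv y i p - 1).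

(* a labeling with y_{jp} = k (witness of feasibility) *)
Definition yfix (j : V) (p : P) (k : bool) : labeling :=
  [ffun x => if x == (j, p) then k else false].

Definition MM (lam : V -> R) (j : V) (p : P) (k : bool) : R :=
  \big[Num.min/L (yfix j p k) lam]_(y : labeling | y (j, p) == k) L y lam.

Definition delta (lam : V -> R) (j : V) (p : P) : R :=
  MM lam j p false - MM lam j p true.

Definition node_update (lam : V -> R) (j : V) : option (V -> R) :=
  match [pick p : P] with
  | None => None
  | Some p0 =>
    let p1 := Order.arg_max p0 predT (delta lam j) in
    match [pick q : P | q != p1] with
    | None => None
    | Some q0 =>
      let p2 := Order.arg_max q0 (fun q => q != p1) (delta lam j) in
      let d1 := delta lam j p1 in
      let d2 := delta lam j p2 in
      if ((0 < d1) && (0 < d2)) || ((d1 < 0) && (d2 < 0)) then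
        Some (fun v => if v == j then lam j + (d1 + d2) / 2 else lam v)
      else None
    end
  end.

Definition pass_step (st : (V -> R) * bool) (j : V) : (V -> R) * bool :=
  match node_update st.1 j with
  | Some lam' => (lam', true)
  | None => st
  end.

Definition pass (ord : seq V) (lam : V -> R) : (V -> R) * bool :=
  foldl pass_step (lam, false) ord.

(* returns ord lam0 lam : the algorithm started at lam0 terminates and
   returns lam *)
Inductive returns (ord : seq V) : (V -> R) -> (V -> R) -> Prop :=
  | returns_stop lam0 : (pass ord lam0).2 = false ->
      returns ord lam0 (pass ord lam0).1
  | returns_cont lam0 lam : (pass ord lam0).2 = true ->
      returns ord (pass ord lam0).1 lam -> returns ord lam0 lam.

Definition is_argmin (lam : V -> R) (y : labeling) : Prop :=
  forall y' : labeling, L y lam <= L y' lam.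

Definition Zset (lam : V -> R) (i : V) (p : P) (z : bool) : Prop :=
  exists y : labeling, is_argmin lam y /\ y (i, p) = z.

Definition weak_agreement (lam : V -> R) : Prop :=
  forall i : V,
    (exists p : P, Zset lam i p true) /\
    (forall p : P, (Zset lam i p true /\ ~ Zset lam i p false) ->
       forall q : P, q != p -> Zset lam i q false).

End MRF.

From HB Require Import structures.
From mathcomp Require Import all_boot all_order all_algebra.
Import Order.TTheory GRing.Theory Num.Theory.
Local Open Scope ring_scope.
Set Implicit Arguments.

(* A label value z lies in Z_{jp}(lam) exactly when its min-marginal is the
   smaller one, so 1 \in Z_{jp} iff delta_{jp} >= 0 and 0 \in Z_{jp} iff
   delta_{jp} <= 0.  When the algorithm stops, no node is updated, so at every
   node the two largest deltas are not of the same strict sign: the largest is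
   >= 0 and all the others are <= 0.  Its label then has 1 in Z, and every other
   label has 0 in Z, which is weak agreement. *)

Section CoordinateAscent.
Variables (R : realFieldType) (V P : finType).
Variables (theta : V -> P -> R) (E : {set {set V}}) (C : {set V} -> P -> R).

Local Notation L := (L theta E C).
Local Notation MM := (MM theta E C).
Local Notation delta := (delta theta E C).
Local Notation Zset := (Zset theta E C).
Local Notation node_update := (node_update theta E C).
Local Notation pass_step := (pass_step theta E C).
Local Notation pass := (pass theta E C).

Lemma MM_le lam j p k (y : labeling V P) : y (j, p) = k -> MM lam j p k <= L y lam.
Proof. by move=> yk; rewrite /MM (bigD1 y) /= ?yk // ge_min lexx. Qed.

Lemma MM_attained lam j p k :
  exists2 y : labeling V P, y (j, p) = k & L y lam = MM lam j p k.
Proof.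
rewrite /MM; apply: (big_ind (fun m => exists2 y : labeling V P, y (j, p) = k & L y lam = m)).
- by exists (yfix j p k); rewrite // /yfix ffunE eqxx.
- by move=> m1 m2 [y1 ? ?] [y2 ? ?]; case: leP => _; [exists y1 | exists y2].
- by move=> y /eqP; exists y.
Qed.

Lemma ZsetE lam j p k : Zset lam j p k <-> MM lam j p k <= MM lam j p (~~ k).
Proof.
split=> [[y [ymin yk]] | MMk_le].
  have [y' y'k <-] := MM_attained lam j p (~~ k).
  by apply: le_trans (ymin y'); apply: MM_le.
have [y yk Ly] := MM_attained lam j p k.
exists y; split=> // y'; rewrite Ly.
case: (boolP (y' (j, p) == k)) => [/eqP | y'Nk]; first exact: MM_le.
by apply: (le_trans MMk_le); apply: MM_le; move: y'Nk; case: (y' _); case: (k).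
Qed.

Lemma Zset1_delta lam j p : Zset lam j p true <-> 0 <= delta lam j p.
Proof. by rewrite /delta subr_ge0; apply: ZsetE. Qed.

Lemma Zset0_delta lam j p : Zset lam j p false <-> delta lam j p <= 0.
Proof. by rewrite /delta subr_le0; apply: ZsetE. Qed.

Lemma foldl_pass_step_unchanged (s : seq V) (st : (V -> R) * bool) :
  (foldl pass_step st s).2 = false ->
  [/\ st.2 = false, (foldl pass_step st s).1 = st.1
     & {in s, forall j, node_update st.1 j = None}].
Proof.
elim: s st => [|x s IHs] st //= /IHs [x_flag -> Hs].
have no_upd : node_update st.1 x = None.
  by move: x_flag; rewrite /pass_step; case: (node_update _ _).
have step_id : pass_step st x = st by rewrite /pass_step no_upd.
rewrite step_id in x_flag Hs *; split=> // j.
by rewrite inE => /predU1P [-> | /Hs].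
Qed.

Lemma returns_no_update ord lam0 lam :
  returns theta E C ord lam0 lam -> {in ord, forall j, node_update lam j = None}.
Proof.
by elim=> // lam1; rewrite /pass => /foldl_pass_step_unchanged [_ ->].
Qed.

Lemma node_update_None_sign lam j : (1 < #|P|)%N -> node_update lam j = None ->
  exists p1, 0 <= delta lam j p1 /\ forall q, q != p1 -> delta lam j q <= 0.
Proof.
move=> P_gt1; rewrite /node_update.
case: pickP => [p0 _ | P0]; last by move: P_gt1; rewrite (eq_card0 P0).
set p1 := Order.arg_max p0 predT _.
have p1_max q : delta lam j q <= delta lam j p1 by rewrite /p1; case: arg_maxP => // ? _; apply.
case: pickP => [q0 q0Np1 | only_p1]; last first.
  suff : (#|P| <= 1)%N by rewrite leqNgt P_gt1.
  rewrite -(card1 p1); apply/subset_leq_card/subsetP => x _.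
  by move: (only_p1 x); rewrite inE => /negbFE.
set p2 := Order.arg_max q0 _ _.
have p2_max q : q != p1 -> delta lam j q <= delta lam j p2.
  by rewrite /p2; case: arg_maxP => // ? _; apply.
case: ifP => // not_same_sign _; exists p1; split.
  rewrite leNgt; apply/negP => d1_lt0.
  by move: not_same_sign; rewrite d1_lt0 (le_lt_trans (p1_max p2) d1_lt0) orbT.
move=> q /p2_max /le_trans; apply; rewrite leNgt; apply/negP => d2_gt0.
by move: not_same_sign; rewrite d2_gt0 (lt_le_trans d2_gt0 (p1_max p2)).
Qed.

Lemma weak_agreement_at lam i p1 :
  0 <= delta lam i p1 -> (forall q, q != p1 -> delta lam i q <= 0) ->
  (exists p, Zset lam i p true) /\
  (forall p, Zset lam i p true /\ ~ Zset lam i p false ->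
     forall q, q != p -> Zset lam i q false).
Proof.
move=> d1_ge0 others_le0; split; first by exists p1; apply/Zset1_delta.
move=> p [_ /Zset0_delta p_not0] q qNp; apply/Zset0_delta.
have p_eq_p1 : p = p1 by apply/eqP/negP => /negP pNp1; apply/p_not0/others_le0.
by apply: others_le0; rewrite -p_eq_p1.
Qed.

End CoordinateAscent.

Theorem theorem3 (R : realFieldType) (V P : finType)
  (theta : V -> P -> R) (E : {set {set V}}) (C : {set V} -> P -> R)
  (ord : seq V) (lam0 lam : V -> R) :
  (1 < #|P|)%N ->
  (forall e, e \in E -> #|e| = 2%N) ->
  (forall e p, e \in E -> 0 <= C e p) ->
  perm_eq ord (enum V) ->
  returns theta E C ord lam0 lam ->
  weak_agreement theta E C lam.
Proof.
move=> P_gt1 _ _ ord_enum terminates i.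
have no_upd : node_update theta E C lam i = None.
  by apply: (returns_no_update terminates); rewrite (perm_mem ord_enum) mem_enum.
have [p1 [d1_ge0 others_le0]] := @node_update_None_sign _ _ _ theta E C _ _ P_gt1 no_upd.
exact: @weak_agreement_at _ _ _ theta E C _ _ _ d1_ge0 others_le0.
Qed.
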